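(* For every $n\ge1$ and $k\ge0$, the following identity holds in $\mathbb C[x_1,\dots,x_n]$: $z_{2k}=-\sum_{i=1}^{k}\sigma_{2i}\,z_{2k-2i}+\sigma_{2k+1}$, where $\sigma_p=\sum_{i_1<\dots<i_p}x_{i_1}\cdots x_{i_p}$ is the $p$-th elementary symmetric polynomial ($\sigma_p=0$ for $p>n$).
   Context: $U(\mathfrak h_n)$ is the associative superalgebra generated by odd elements $\xi_1,\dots,\xi_n$ with $\xi_i\xi_j+\xi_j\xi_i=0$ for $i\neq j$; $x_i=\xi_i^2$ are central. Let $T$ be the $\mathbb C[x_1,\dots,x_n]$-linear endomorphism of the free $\mathbb C[x_1,\dots,x_n]$-module with basis $\xi_1,\dots,\xi_n$ given by $T(\xi_j)=\sum_i t_{ij}\xi_i$ with $t_{ii}=0$, $t_{ij}=x_j$ for $i<j$, $t_{ij}=-x_j$ for $i>j$. Put $\phi_0=\sum_i\xi_i$, $\phi_k=T^k(\phi_0)$, and for $k\ge0$ let $z_{2k}=\frac12(\phi_0\phi_{2k}+\phi_{2k}\phi_0)$, which lies in $\mathbb C[x_1,\dots,x_n]$. *)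

From HB Require Import structures.
From mathcomp Require Import all_boot all_order all_algebra.
From mathcomp Require Import mpoly.
Set Implicit Arguments. Unset Strict Implicit. Unset Printing Implicit Defensive.
Import Order.TTheory GRing.Theory Num.Theory.
Local Open Scope ring_scope.

(* Concrete model of U(h_n): the free C[x_1..x_n]-module with basis the
   ordered monomials xi_S = xi_{s_1} ... xi_{s_k} (s_1 < ... < s_k, S a subset
   of {0..n-1}), with the multiplication induced by
   xi_i xi_j = - xi_j xi_i (i <> j) and xi_i^2 = x_i (central).
   An element is the function S |-> coefficient of xi_S. *)
Section Hn.
Variables (C : numClosedFieldType) (n : nat).

Definition UH := {ffun {set 'I_n} -> {mpoly C[n]}}.

(* sign of reordering xi_S xi_T: one transposition for every pair
   (i in S, j in T) with j < i *)
Definition sgnST (S T : {set 'I_n}) : {mpoly C[n]} :=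
  (-1) ^+ #|[set p : 'I_n * 'I_n | [&& p.1 \in S, p.2 \in T & (p.2 < p.1)%N]]|.

(* xi_S xi_T = sgnST S T * (prod_{i in S :&: T} x_i) * xi_(S symdiff T) *)
Definition mulUH (u v : UH) : UH :=
  [ffun U => \sum_(S : {set 'I_n}) \sum_(T : {set 'I_n} | (S :\: T) :|: (T :\: S) == U)
      sgnST S T * (\prod_(i in S :&: T) 'X_i) * u S * v T].

Definition addUH (u v : UH) : UH := [ffun U => u U + v U].

(* element sum_i a_i xi_i of the free module with basis xi_1..xi_n *)
Definition linUH (a : 'I_n -> {mpoly C[n]}) : UH :=
  [ffun U => \sum_(i : 'I_n | U == [set i]) a i].

(* the endomorphism T : T(xi_j) = sum_i t_ij xi_i, on coefficient vectors *)
Definition tcoef (i j : 'I_n) : {mpoly C[n]} :=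
  if (i < j)%N then 'X_j else if (j < i)%N then - 'X_j else 0.

Definition Tmap (a : 'I_n -> {mpoly C[n]}) : 'I_n -> {mpoly C[n]} :=
  fun i => \sum_(j : 'I_n) tcoef i j * a j.

Definition phicoef (k : nat) : 'I_n -> {mpoly C[n]} :=
  iter k Tmap (fun _ => 1).

Definition phi (k : nat) : UH := linUH (phicoef k).

Definition z2 (k : nat) : UH :=
  [ffun U => (2%:R ^-1 : C) *: addUH (mulUH (phi 0) (phi (2 * k)))
                                    (mulUH (phi (2 * k)) (phi 0)) U].

End Hn.

From HB Require Import structures.
From mathcomp Require Import all_boot all_order all_algebra.
From mathcomp Require Import mpoly ring.
Import Order.TTheory GRing.Theory Num.Theory.
Local Open Scope ring_scope.
Set Implicit Arguments. Unset Strict Implicit.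

(* Anticommuting linear elements satisfy
   a b + b a = 2 sum_i a_i b_i x_i  for  a = sum_i a_i xi_i, b = sum_i b_i xi_i,
   so z_{2k} is the scalar sum_j x_j phi_{2k}(j).  To compute it, put
   P(t) = prod_j (1 + x_j t), Q(t) = prod_j (1 - x_j t) and
   U_i(t) = 2 prod_{j<i} (1 - x_j t) prod_{j>i} (1 + x_j t).
   Telescoping the products gives U = P + Q + t T U and sum_j x_j t U_j = P - Q.
   The first identity says that the coefficient of t^m in U_i is
   sum_l (P + Q)_l phi_{m-l}(i).  Reading the second at t^{2k+1}, where
   (P + Q)_l is 2 sigma_l for even l and 0 for odd l while
   (P - Q)_{2k+1} = 2 sigma_{2k+1}, yields
   sum_{i<=k} sigma_{2i} z_{2k-2i} = sigma_{2k+1}. *)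

Section FlipProd.
Context {R : comNzRingType} (n : nat) (y : nat -> R).

Definition flip_prod i :=
  \prod_(0 <= j < i) (1 - y j) * \prod_(i <= j < n) (1 + y j).

Definition flip_prod_skip i :=
  \prod_(0 <= j < i) (1 - y j) * \prod_(i.+1 <= j < n) (1 + y j).

Lemma flip_prod0 : flip_prod 0 = \prod_(0 <= j < n) (1 + y j).
Proof. by rewrite /flip_prod big_geq // mul1r. Qed.

Lemma flip_prodn : flip_prod n = \prod_(0 <= j < n) (1 - y j).
Proof. by rewrite /flip_prod [X in _ * X]big_geq // mulr1. Qed.

Lemma flip_prod_skipD i : (i < n)%N -> flip_prod_skip i * (1 + y i) = flip_prod i.
Proof. by move=> lt_in; rewrite /flip_prod /flip_prod_skip (big_ltn lt_in); ring. Qed.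

Lemma flip_prod_skipB i : (i < n)%N -> flip_prod_skip i * (1 - y i) = flip_prod i.+1.
Proof. by move=> lt_in; rewrite /flip_prod /flip_prod_skip big_nat_recr //= mulrAC. Qed.

Lemma flip_prodB i : (i < n)%N ->
  (y i * flip_prod_skip i) *+ 2 = flip_prod i - flip_prod i.+1.
Proof.
move=> lt_in; rewrite -(flip_prod_skipD lt_in) -(flip_prod_skipB lt_in).
by move: (flip_prod_skip i) (y i) => a b; ring.
Qed.

Lemma flip_prodD i : (i < n)%N -> flip_prod_skip i *+ 2 = flip_prod i + flip_prod i.+1.
Proof.
move=> lt_in; rewrite -(flip_prod_skipD lt_in) -(flip_prod_skipB lt_in).
by move: (flip_prod_skip i) (y i) => a b; ring.
Qed.

Lemma telescope_flip_prod m p : (m <= p <= n)%N ->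
  \sum_(m <= j < p) (y j * flip_prod_skip j) *+ 2 = flip_prod m - flip_prod p.
Proof.
case/andP=> le_mp le_pn.
rewrite (telescope_sumr_eq (fun j => - flip_prod j)) ?opprK 1?addrC //.
move=> j /andP[_ lt_jp]; rewrite flip_prodB ?opprK 1?addrC //.
exact: leq_trans lt_jp le_pn.
Qed.

Lemma flip_prod_skip_balance i : (i < n)%N ->
  flip_prod_skip i *+ 2 - \sum_(i.+1 <= j < n) (y j * flip_prod_skip j) *+ 2
    + \sum_(0 <= j < i) (y j * flip_prod_skip j) *+ 2 = flip_prod 0 + flip_prod n.
Proof.
move=> lt_in; have le_in := ltnW lt_in.
rewrite !telescope_flip_prod ?lt_in ?le_in ?leqnn // flip_prodD //.
by move: (flip_prod 0) (flip_prod n) (flip_prod i) (flip_prod i.+1) => a b c d; ring.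
Qed.

End FlipProd.

Lemma coef_prod_1DCX (R : comNzRingType) (I : finType) (c : I -> R) p :
  (\prod_(i : I) (1 + (c i)%:P * 'X))`_p =
  \sum_(J : {set I} | #|J| == p) \prod_(i in J) c i.
Proof.
under eq_bigr do rewrite addrC.
rewrite bigA_distr coef_sum [RHS]big_mkcond /=.
apply: eq_bigr => J _; rewrite -big_mkcond /= big_split /= prodr_const.
rewrite -rmorph_prod coefCM coefXn.
by case: eqP => [->|/nesym/eqP/negbTE->]; rewrite ?eqxx ?mulr1 ?mulr0.
Qed.

Lemma sum_ord_even (V : zmodType) (F : nat -> V) k :
  (forall l, odd l -> F l = 0) ->
  \sum_(l < (2 * k).+1) F l = \sum_(i < k.+1) F (2 * i)%N.
Proof.
move=> F_odd; elim: k => [|k IH]; first by rewrite !big_ord1.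
rewrite mulnS !addSn add0n big_ord_recr /= big_ord_recr /= IH.
rewrite F_odd ?addr0; last by rewrite /= oddM.
by rewrite [in RHS]big_ord_recr /= mulnS.
Qed.

Lemma scaleV2_mulr2n (F : numFieldType) (V : lmodType F) (v : V) :
  (2%:R^-1 : F) *: (v *+ 2) = v.
Proof. by rewrite -scalerMnr scalerMnl -mulr_natr mulVf ?pnatr_eq0 ?scale1r. Qed.

Section Anticommutator.
Variables (C : numClosedFieldType) (n : nat).
Local Notation R := {mpoly C[n]}.

Definition mulUH_coef (U S T : {set 'I_n}) : R :=
  ((S :\: T) :|: (T :\: S) == U)%:R * sgnST C S T * \prod_(i in S :&: T) 'X_i.

Lemma sgnST_set1 (i j : 'I_n) :
  sgnST C [set i] [set j] = if (j < i)%N then -1 else 1.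
Proof.
rewrite /sgnST; case: ltnP => [lt_ji|le_ij].
  rewrite (_ : [set p : 'I_n * 'I_n | _] = [set (i, j)]) ?cards1 ?expr1 //.
  apply/setP => -[p1 p2]; rewrite !inE /= xpair_eqE.
  by case: eqP => [->|] //=; case: eqP => [->|] //=; rewrite lt_ji.
rewrite (_ : [set p : 'I_n * 'I_n | _] = set0) ?cards0 ?expr0 //.
apply/setP => -[p1 p2]; rewrite !inE /=.
by case: eqP => [->|] //=; case: eqP => [->|] //=; rewrite ltnNge le_ij.
Qed.

Lemma mulUH_coef_anticomm U (i j : 'I_n) :
  mulUH_coef U [set i] [set j] + mulUH_coef U [set j] [set i] =
  ((i == j) && (U == set0))%:R * 'X_i *+ 2.
Proof.
rewrite /mulUH_coef; case: (eqVneq i j) => [<-|neq_ij] /=.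
  by rewrite setDv setU0 setIid big_set1 sgnST_set1 ltnn eq_sym mulr2n; ring.
have disj_ij : [set i] :&: [set j] = set0.
  by apply/setP => x; rewrite !inE; case: eqP => // ->; rewrite (negbTE neq_ij).
rewrite disj_ij setIC disj_ij big_set0 setUC !sgnST_set1 mul0r mul0rn.
case: ltngtP neq_ij => [_ _|_ _|/val_inj->]; last by rewrite eqxx.
  by move: (_%:R) => c; ring.
by move: (_%:R) => c; ring.
Qed.

Lemma sum_set1_coef (G : {set 'I_n} -> R) (a : 'I_n -> R) :
  \sum_(S : {set 'I_n}) (\sum_(i | S == [set i]) a i) * G S =
  \sum_(i : 'I_n) a i * G [set i].
Proof.
under eq_bigr do rewrite mulr_suml big_mkcond /=.
rewrite exchange_big /=; apply: eq_bigr => i _.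
by rewrite -big_mkcond /= big_pred1_eq.
Qed.

Lemma mulUH_linUH (a b : 'I_n -> R) U :
  mulUH (linUH a) (linUH b) U =
  \sum_i a i * \sum_j b j * mulUH_coef U [set i] [set j].
Proof.
rewrite ffunE; transitivity (\sum_S (\sum_(i | S == [set i]) a i) *
  \sum_T (\sum_(j | T == [set j]) b j) * mulUH_coef U S T); last first.
  by rewrite sum_set1_coef; under eq_bigr do rewrite sum_set1_coef.
apply: eq_bigr => S _; rewrite big_mkcond mulr_sumr; apply: eq_bigr => T _.
rewrite !ffunE /mulUH_coef; case: (_ == U); last by rewrite !mul0r !mulr0.
by rewrite mul1r; ring.
Qed.

Lemma anticomm_linUH (a b : 'I_n -> R) U :
  mulUH (linUH a) (linUH b) U + mulUH (linUH b) (linUH a) U =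
  \sum_i a i * b i * ((U == set0)%:R * 'X_i *+ 2).
Proof.
rewrite !mulUH_linUH.
have swap_ab : \sum_i b i * \sum_j a j * mulUH_coef U [set i] [set j] =
    \sum_i \sum_j a i * b j * mulUH_coef U [set j] [set i].
  under eq_bigr do rewrite mulr_sumr.
  rewrite exchange_big /=; apply: eq_bigr => i _; apply: eq_bigr => j _.
  by move: (mulUH_coef _ _ _) => g; ring.
rewrite swap_ab; under eq_bigr do rewrite mulr_sumr.
rewrite -big_split /=; apply: eq_bigr => i _.
rewrite -big_split /= (bigD1 i) //= big1 => [|j neq_ji].
  by rewrite addr0 mulrA -mulrDr mulUH_coef_anticomm eqxx.
by rewrite mulrA -mulrDr mulUH_coef_anticomm eq_sym (negbTE neq_ji) mul0r mul0rn mulr0.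
Qed.

Lemma phicoefS s (i : 'I_n) :
  phicoef C s.+1 i = \sum_(j : 'I_n) tcoef C i j * phicoef C s j.
Proof. by []. Qed.

Definition zpoly (s : nat) : R := \sum_(j : 'I_n) 'X_j * phicoef C s j.

Lemma z2E k U : z2 C n k U = (U == set0)%:R * zpoly (2 * k).
Proof.
rewrite ffunE ffunE anticomm_linUH -[RHS]scaleV2_mulr2n; congr (_ *: _).
rewrite /zpoly mulr_sumr -sumrMnl; apply: eq_bigr => i _.
by rewrite [phicoef C 0 i]/phicoef /= mul1r; move: (phicoef _ _ _) (_%:R) => p c; ring.
Qed.

End Anticommutator.

Section GeneratingFunctions.
Variables (C : numClosedFieldType) (n' : nat).
Local Notation n := n'.+1.
Local Notation R := {mpoly C[n]}.

(* x_j t, indexed by nat (through inord) to fit the telescoping lemmas *)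
Definition xt (j : nat) : {poly R} := ('X_(inord j))%:P * 'X.

Definition Ugen (i : nat) : {poly R} := flip_prod_skip n xt i *+ 2.
Definition Pgen : {poly R} := flip_prod n xt 0.
Definition Qgen : {poly R} := flip_prod n xt n.

Lemma mulX_sum_tcoef (F : nat -> {poly R}) (i : 'I_n) :
  'X * \sum_(j : 'I_n) (tcoef C i j)%:P * F j =
  \sum_(i.+1 <= j < n) xt j * F j - \sum_(0 <= j < i) xt j * F j.
Proof.
have lt_in := ltn_ord i.
transitivity (\sum_(0 <= j < n) 'X * ((tcoef C i (inord j))%:P * F j)).
  by rewrite mulr_sumr big_mkord; apply: eq_bigr => j _; rewrite inord_val.
rewrite (@big_cat_nat _ _ _ i) ?(ltnW lt_in) // (big_ltn lt_in) /=.
rewrite inord_val /tcoef ltnn polyC0 mul0r mulr0 add0r addrC -sumrN.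
congr (_ + _); apply: eq_big_nat => j /andP[lo_j hi_j].
  by rewrite /tcoef inordK // lo_j /xt mulrCA mulrA.
rewrite /tcoef (inordK (ltn_trans hi_j lt_in)) ltnNge (ltnW hi_j) hi_j /=.
by rewrite /xt rmorphN mulNr mulrN mulrCA mulrA.
Qed.

Lemma sum_xt_Ugen_nat m p :
  \sum_(m <= j < p) xt j * Ugen j =
  \sum_(m <= j < p) (xt j * flip_prod_skip n xt j) *+ 2.
Proof. by apply: eq_bigr => j _; rewrite mulrnAr. Qed.

Lemma Ugen_fixpoint (i : 'I_n) :
  Ugen i = Pgen + Qgen + 'X * \sum_(j : 'I_n) (tcoef C i j)%:P * Ugen j.
Proof.
rewrite mulX_sum_tcoef !sum_xt_Ugen_nat /Pgen /Qgen.
rewrite -(flip_prod_skip_balance xt (ltn_ord i)) -/(Ugen i).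
by move: (Ugen i) (\sum_(_ <= _ < _ | _) _) (\sum_(_ <= _ < i | _) _) => u s t; ring.
Qed.

Lemma sum_xt_Ugen : \sum_(j < n) xt j * Ugen j = Pgen - Qgen.
Proof.
rewrite -(big_mkord xpredT (fun j => xt j * Ugen j)) sum_xt_Ugen_nat.
by rewrite telescope_flip_prod ?leqnn.
Qed.

Lemma coef_Ugen m (i : 'I_n) :
  (Ugen i)`_m = \sum_(l < m.+1) (Pgen + Qgen)`_l * phicoef C (m - l) i.
Proof.
elim: m i => [|m IH] i.
  rewrite Ugen_fixpoint coefD mulrC coefMX addr0 big_ord1.
  by rewrite [phicoef _ _ _]/phicoef /= mulr1.
rewrite Ugen_fixpoint coefD mulrC coefMX /= coef_sum [RHS]big_ord_recr /=.
rewrite subnn [phicoef C 0 i]/phicoef /= mulr1 addrC; congr (_ + _).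
under eq_bigr do rewrite coefCM IH mulr_sumr.
rewrite exchange_big /=; apply: eq_bigr => l _.
have le_lm : (l <= m)%N := ltn_ord l.
rewrite (subSn le_lm) phicoefS mulr_sumr; apply: eq_bigr => j _.
exact: mulrCA.
Qed.

Lemma coef_Pgen p : Pgen`_p = mesym n C p.
Proof.
rewrite /Pgen flip_prod0 big_mkord.
under eq_bigr => j _ do rewrite /xt inord_val.
by rewrite coef_prod_1DCX.
Qed.

Lemma coef_Qgen p : Qgen`_p = (-1) ^+ p * mesym n C p.
Proof.
rewrite /Qgen flip_prodn big_mkord.
under eq_bigr => j _ do rewrite /xt inord_val -mulNr -polyCN.
rewrite coef_prod_1DCX /mesym mulr_sumr; apply: eq_bigr => J /eqP card_J.
by rewrite prodrN card_J.
Qed.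

Lemma coef_sum_xt_Ugen m :
  (\sum_(j < n) xt j * Ugen j)`_m.+1 =
  \sum_(l < m.+1) (Pgen + Qgen)`_l * zpoly C n (m - l).
Proof.
rewrite coef_sum.
under eq_bigr => j _ do
  rewrite /xt -mulrA coefCM coefXM /= inord_val coef_Ugen mulr_sumr.
rewrite exchange_big /zpoly; apply: eq_bigr => l _; rewrite mulr_sumr.
by apply: eq_bigr => j _; rewrite mulrCA.
Qed.

Lemma zpoly_convolution k :
  \sum_(i < k.+1) mesym n C (2 * i) * zpoly C n (2 * k - 2 * i) = mesym n C (2 * k + 1).
Proof.
have := congr1 (fun p : {poly R} => p`_(2 * k).+1) sum_xt_Ugen.
rewrite /= coef_sum_xt_Ugen coefB coef_Pgen coef_Qgen.
rewrite (@sum_ord_even _ (fun l => (Pgen + Qgen)`_l * zpoly C n (2 * k - l)));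
  last by move=> l odd_l; rewrite coefD coef_Pgen coef_Qgen -signr_odd odd_l
                                  mulN1r addrN mul0r.
rewrite -signr_odd /= oddM /= mulN1r opprK -mulr2n addn1 => conv2.
apply: (can_inj (@scaleV2_mulr2n C _)); rewrite /= -conv2 -sumrMnl.
apply: eq_bigr => i _.
by rewrite coefD coef_Pgen coef_Qgen -signr_odd oddM /= mul1r -mulr2n mulrnAl.
Qed.

Lemma zpoly_recursion k :
  zpoly C n (2 * k) =
  - (\sum_(1 <= i < k.+1) mesym n C (2 * i) * zpoly C n (2 * (k - i)))
  + mesym n C (2 * k + 1).
Proof.
rewrite -zpoly_convolution big_ord_recl muln0 subn0 mesym0E mul1r.
rewrite (eq_bigr (fun i : 'I_k => mesym n C (2 * i.+1) * zpoly C n (2 * (k - i.+1)))).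
  by rewrite big_add1 big_mkord addrCA addNr addr0.
by move=> i _; rewrite mulnBr.
Qed.

End GeneratingFunctions.

Theorem lemma5p4 (C : numClosedFieldType) (n k : nat) (hn : (1 <= n)%N) :
  z2 C n k =
  [ffun U : {set 'I_n} =>
     - (\sum_(1 <= i < k.+1) mesym n C (2 * i) * z2 C n (k - i) U)
     + (U == set0)%:R * mesym n C (2 * k + 1)].
Proof.
case: n hn => // n _; apply/ffunP => U.
rewrite z2E ffunE zpoly_recursion mulrDr mulrN mulr_sumr.
by congr (- _ + _); apply: eq_bigr => i _; rewrite z2E mulrCA.
Qed.
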